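(* Let $d$ be prime, $n\ge1$, $G$ invertible over $\mathbb Z_d$, and $\rho,\sigma$ $n$-qudit states, with $\vec\lambda_\tau$ the eigenvalue vector of $\tau$. (1) If $G$ is odd-parity positive, then $\vec\lambda_{\rho\boxtimes\sigma}\prec\vec\lambda_\sigma$, hence $f(\rho\boxtimes\sigma)\ge f(\sigma)$ for every Schur-concave $f$. (2) If $G$ is even-parity positive, then $\vec\lambda_{\rho\boxtimes\sigma}\prec\vec\lambda_\rho$, hence $f(\rho\boxtimes\sigma)\ge f(\rho)$ for every Schur-concave $f$. (3) If $G$ is positive, both hold, hence $f(\rho\boxtimes\sigma)\ge\max\{f(\rho),f(\sigma)\}$ for every Schur-concave $f$.
   Context: Fix a prime $d$. Let $G=\begin{pmatrix}g_{00}&g_{01}\\ g_{10}&g_{11}\end{pmatrix}$ over $\mathbb Z_d$ with $\det G\not\equiv0$, $N=(\det G)^{-1}$. $G$ is nontrivial if at most one entry is $0$ mod $d$; odd-parity positive if nontrivial and $g_{01},g_{10}\not\equiv0$; even-parity positive if nontrivial and $g_{00},g_{11}\not\equiv0$; positive if both. Key unitary on $(\mathbb C^d)^{\otimes n}\otimes(\mathbb C^d)^{\otimes n}$: $U|\vec i\rangle|\vec j\rangle=|Ng_{11}\vec i-Ng_{10}\vec j\rangle|-Ng_{01}\vec i+Ng_{00}\vec j\rangle$; convolution $\rho\boxtimes\sigma=\mathrm{Tr}_B[U(\rho\otimes\sigma)U^\dagger]$. Majorization $\vec p\prec\vec q$ of probability vectors: $\sum_{i\le k}p^\downarrow_i\le\sum_{i\le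 k}q^\downarrow_i$ for all $k$ (decreasing rearrangements). $f$ is Schur concave if $\vec p\prec\vec q\Rightarrow f(\vec p)\ge f(\vec q)$; $f(\rho):=f(\vec\lambda_\rho)$. *)

From HB Require Import structures.
From mathcomp Require Import all_boot all_order all_algebra.
Set Implicit Arguments. Unset Strict Implicit. Unset Printing Implicit Defensive.
Import Order.TTheory GRing.Theory Num.Theory.
Local Open Scope ring_scope.

Definition g00 (d : nat) (G : 'M['F_d]_2) : 'F_d := G ord0 ord0.
Definition g01 (d : nat) (G : 'M['F_d]_2) : 'F_d := G ord0 ord_max.
Definition g10 (d : nat) (G : 'M['F_d]_2) : 'F_d := G ord_max ord0.
Definition g11 (d : nat) (G : 'M['F_d]_2) : 'F_d := G ord_max ord_max.

Definition nontrivialG (d : nat) (G : 'M['F_d]_2) : bool :=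
  (#|[set ij : 'I_2 * 'I_2 | G ij.1 ij.2 == 0%R] | <= 1)%N.
Definition odd_parity_positive (d : nat) (G : 'M['F_d]_2) : bool :=
  [&& nontrivialG G, g01 G != 0 & g10 G != 0].
Definition even_parity_positive (d : nat) (G : 'M['F_d]_2) : bool :=
  [&& nontrivialG G, g00 G != 0 & g11 G != 0].
Definition positiveG (d : nat) (G : 'M['F_d]_2) : bool :=
  odd_parity_positive G && even_parity_positive G.

(* computational basis labels of (C^d)^{\otimes n} : vectors in Z_d^n *)
Definition qidx (d n : nat) : finType := {ffun 'I_n -> 'F_d}.

(* operators on the space with orthonormal basis indexed by a finType T *)
Definition op (C : Type) (T : finType) := T -> T -> C.

Definition mx_of_op (C : numClosedFieldType) (T : finType) (A : op C T)
  : 'M[C]_#|T| := \matrix_(i, j) A (enum_val i) (enum_val j).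

Definition is_state (C : numClosedFieldType) (T : finType) (A : op C T) : Prop :=
  [/\ (forall i j, A j i = (A i j)^*),
      (forall v : T -> C, 0 <= \sum_i \sum_j (v i)^* * A i j * v j)
    & \sum_i A i i = 1].

Definition eigvec (C : numClosedFieldType) (T : finType) (A : op C T)
  (l : 'I_#|T| -> C) : Prop :=
  char_poly (mx_of_op A) = \prod_i ('X - (l i)%:P).

Definition tens (C : numClosedFieldType) (T : finType) (A B : op C T)
  : op C (T * T)%type := fun p q => A p.1 q.1 * B p.2 q.2.

Definition keymap (d n : nat) (G : 'M['F_d]_2) (ij : qidx d n * qidx d n)
  : qidx d n * qidx d n :=
  let N := (\det G)^-1 in
  ([ffun k => N * g11 G * ij.1 k - N * g10 G * ij.2 k],
   [ffun k => - (N * g01 G * ij.1 k) + N * g00 G * ij.2 k]).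

Definition keyU (C : numClosedFieldType) (d n : nat) (G : 'M['F_d]_2)
  : op C (qidx d n * qidx d n)%type :=
  fun p q => if p == keymap G q then 1 else 0.

Definition conjU (C : numClosedFieldType) (T : finType) (U M : op C T) : op C T :=
  fun p q => \sum_r \sum_s U p r * M r s * (U q s)^*.

Definition ptrB (C : numClosedFieldType) (T : finType) (M : op C (T * T)%type)
  : op C T := fun a a' => \sum_b M (a, b) (a', b).

Definition conv (C : numClosedFieldType) (d n : nat) (G : 'M['F_d]_2)
  (rho sigma : op C (qidx d n)) : op C (qidx d n) :=
  ptrB (conjU (keyU C G) (tens rho sigma)).

Definition prob_vec (C : numClosedFieldType) (m : nat) (p : 'I_m -> C) : Prop :=
  (forall i, 0 <= p i) /\ \sum_i p i = 1.

Definition decr (C : numClosedFieldType) (m : nat) (p : 'I_m -> C) : seq C :=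
  sort (fun x y => y <= x) [seq p i | i <- enum 'I_m].

Definition majorized (C : numClosedFieldType) (m : nat) (p q : 'I_m -> C) : Prop :=
  forall k : nat, \sum_(i < k) nth 0 (decr p) i <= \sum_(i < k) nth 0 (decr q) i.

Definition schur_concave (C : numClosedFieldType) (m : nat)
  (f : ('I_m -> C) -> C) : Prop :=
  forall p q, prob_vec p -> prob_vec q -> majorized p q -> f q <= f p.

From HB Require Import structures.
From mathcomp Require Import all_boot all_order all_algebra perm.
From mathcomp Require Import ring.
Set Implicit Arguments. Unset Strict Implicit. Unset Printing Implicit Defensive.
Import Order.TTheory GRing.Theory Num.Theory.
Local Open Scope ring_scope.

(* Fix rho.  The map Phi := (sigma |-> rho [x] sigma) is linear, positive and
   trace preserving, and when g01 and g10 are nonzero it is also unital.  In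
   orthonormal eigenbases (e_j) of sigma and (f_i) of Phi sigma, the eigenvalues
   of Phi sigma are S lambda_sigma with S i j = <f_i| Phi (|e_j><e_j|) |f_i>, a
   doubly stochastic matrix, and the image of a vector under a doubly
   stochastic matrix is majorized by it.  Exchanging the columns of G exchanges
   the roles of rho and sigma, which reduces the even-parity case to the
   odd-parity one. *)

Lemma char_poly_similar (R : comUnitRingType) m (P X : 'M[R]_m) : P \in unitmx ->
  char_poly (invmx P *m X *m P) = char_poly X.
Proof.
move=> Pu; rewrite /char_poly /char_poly_mx.
have -> : 'X%:M - map_mx polyC (invmx P *m X *m P) =
  map_mx polyC (invmx P) *m ('X%:M - map_mx polyC X) *m map_mx polyC P.
  rewrite mulmxBr mulmxBl !map_mxM; congr (_ - _).
  by rewrite -mulmxA mul_scalar_mx -scalemxAr -map_mxM mulVmx // map_mx1 scalemx1.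
rewrite !det_mulmx !det_map_mx mulrC mulrA -rmorphM -det_mulmx mulmxV //.
by rewrite det1 rmorph1 mul1r.
Qed.

Section Spectral.
Local Open Scope sesquilinear_scope.

Lemma hermitian_op_spectral (C : numClosedFieldType) (T : finType) (A : op C T) :
  (forall i j, A j i = (A i j)^*) ->
  exists (b : 'I_#|T| -> C) (e : 'I_#|T| -> T -> C),
  [/\ char_poly (mx_of_op A) = \prod_k ('X - (b k)%:P),
      forall x y, A x y = \sum_k b k * e k x * (e k y)^*,
      forall k k', \sum_x (e k x)^* * e k' x = (k == k')%:R &
      forall x y, \sum_k e k x * (e k y)^* = (x == y)%:R].
Proof.
move=> Ah; set M := mx_of_op A.
have herm : M \is hermsymmx.
  apply/is_hermitianmxP; rewrite expr0 scale1r; apply/matrixP => i j.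
  by rewrite !mxE Ah.
have /orthomx_spectralP eqM := hermitian_normalmx herm.
set P := spectralmx M in eqM; set D := spectral_diag M in eqM.
have Pu : P \is unitarymx by apply: spectral_unitarymx.
have Pun : P \in unitmx by apply: spectral_unit.
have PPt : P *m P^t* = 1%:M by apply/unitarymxP.
have PtP : P^t* *m P = 1%:M by rewrite -invmx_unitary // mulVmx.
exists (fun k => D 0 k), (fun k x => (P k (enum_rank x))^*); split.
- rewrite -/M eqM char_poly_similar // char_poly_trig ?diag_mx_is_trig //.
  by apply: eq_bigr => i _; rewrite mxE eqxx mulr1n.
- move=> x y; rewrite -{1}(enum_rankK x) -{1}(enum_rankK y).
  have -> : A (enum_val (enum_rank x)) (enum_val (enum_rank y)) =
     M (enum_rank x) (enum_rank y) by rewrite mxE.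
  rewrite eqM invmx_unitary // mxE; apply: eq_bigr => k _.
  by rewrite mul_mx_diag !mxE conjCK [_ * D 0 k]mulrC.
- move=> k k'; have /matrixP/(_ k k') := PPt; rewrite !mxE => <-.
  rewrite [LHS](reindex (fun i : 'I_#|T| => enum_val i)) /=; last first.
    by exists enum_rank => z _; rewrite ?enum_valK ?enum_rankK.
  by apply: eq_bigr => i _; rewrite enum_valK conjCK !mxE.
- move=> x y; have /matrixP/(_ (enum_rank x) (enum_rank y)) := PtP.
  rewrite !mxE (inj_eq enum_rank_inj) => <-.
  by apply: eq_bigr => k _; rewrite !mxE conjCK.
Qed.

End Spectral.

Lemma sumr_ord_widen (R : nmodType) m k (F : nat -> R) : (k <= m)%N ->
  \sum_(q < k) F q = \sum_(q < m) (if (q < k)%N then F q else 0).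
Proof. by move=> km; rewrite (big_ord_widen _ _ km) big_mkcond. Qed.

(* Subtracting sum_q ([q < k] - c q) * t (k - 1), which is 0, leaves only
   nonnegative terms since t is decreasing. *)
Lemma weighted_sum_le_prefix (R : numDomainType) (t c : nat -> R) m k :
  (k <= m)%N -> (forall i j, (i <= j < m)%N -> t j <= t i) ->
  (forall q, (q < m)%N -> 0 <= c q <= 1) -> \sum_(q < m) c q = k%:R ->
  \sum_(q < m) c q * t q <= \sum_(q < k) t q.
Proof.
move=> km tdec cb csum.
set tau := t (minn k m.-1).
rewrite -subr_ge0 (sumr_ord_widen _ km) -sumrB.
have -> : \sum_(q < m) ((if (q < k)%N then t q else 0) - c q * t q) =
          \sum_(q < m) ((((q < k)%N)%:R - c q) * t q).
  apply: eq_bigr => q _; case: ifP => _; rewrite mulrBl ?mul1r ?mul0r // sub0r.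
have shift0 : \sum_(q < m) ((((q < k)%N)%:R - c q) * tau) = 0.
  have hk : \sum_(q < m) (((q < k)%N)%:R : R) = k%:R.
    have <- : \sum_(q < k) (1 : R) = k%:R by rewrite sumr_const card_ord.
    rewrite (sumr_ord_widen (fun _ => (1 : R)) km).
    by apply: eq_bigr => q _; case: ifP.
  by rewrite -mulr_suml sumrB csum hk subrr mul0r.
rewrite -[X in X <= _]shift0.
apply: ler_sum => q _; rewrite -subr_ge0 -mulrBr.
have qm := ltn_ord q; have /andP[c0 c1] := cb q qm.
have m0 : (0 < m)%N by apply: leq_ltn_trans qm.
have mlt : (minn k m.-1 < m)%N.
  by apply: leq_ltn_trans (geq_minr _ _) _; rewrite ltn_predL.
case: ltnP => qk /=.
- apply: mulr_ge0; first by rewrite subr_ge0.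
  rewrite subr_ge0; apply: tdec; rewrite mlt andbT.
  by rewrite leq_min (ltnW qk) -ltnS prednK.
- apply: mulr_le0; first by rewrite sub0r oppr_le0.
  by rewrite subr_le0; apply: tdec; rewrite qm andbT geq_min qk.
Qed.

Lemma sum_nth_perm_iota (R : nmodType) m (Is : seq nat) (F : nat -> R) :
  perm_eq Is (iota 0 m) -> \sum_(i < m) F (nth 0%N Is i) = \sum_(i < m) F i.
Proof.
move=> pI; have sI : size Is = m by rewrite (perm_size pI) size_iota.
rewrite -(big_mkord xpredT (fun i => F (nth 0%N Is i))) -{1}sI.
rewrite -(big_nth 0%N xpredT F) (perm_big _ pI) -(big_mkord xpredT F).
by rewrite /index_iota subn0.
Qed.

Lemma nth_perm_iota_lt m (Is : seq nat) i :
  perm_eq Is (iota 0 m) -> (i < m)%N -> (nth 0%N Is i < m)%N.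
Proof.
move=> pI im; have sI : size Is = m by rewrite (perm_size pI) size_iota.
have : nth 0%N Is i \in iota 0 m by rewrite -(perm_mem pI) mem_nth // sI.
by rewrite mem_iota.
Qed.

(* The column sums of the k rows of S selected by Is are weights in [0, 1] of
   total mass k on the entries of M. *)
Lemma doubly_stochastic_prefix_le (R : numDomainType) m (L M : nat -> R)
    (S : nat -> nat -> R) (Is Js : seq nat) k :
  (k <= m)%N ->
  (forall i j, (i < m)%N -> (j < m)%N -> 0 <= S i j) ->
  (forall j, (j < m)%N -> \sum_(i < m) S i j = 1) ->
  (forall i, (i < m)%N -> \sum_(j < m) S i j = 1) ->
  (forall i, (i < m)%N -> L i = \sum_(j < m) S i j * M j) ->
  perm_eq Is (iota 0 m) -> perm_eq Js (iota 0 m) ->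
  (forall i j, (i <= j < m)%N -> M (nth 0%N Js j) <= M (nth 0%N Js i)) ->
  \sum_(i < k) L (nth 0%N Is i) <= \sum_(i < k) M (nth 0%N Js i).
Proof.
move=> km S0 Sc Sr LSM pI pJ Msorted.
have Is_lt (i : 'I_k) : (nth 0%N Is i < m)%N.
  by apply: nth_perm_iota_lt pI _; apply: leq_trans (ltn_ord i) km.
pose c j := \sum_(i < k) S (nth 0%N Is i) j.
have -> : \sum_(i < k) L (nth 0%N Is i) = \sum_(j < m) c j * M j.
  under [RHS]eq_bigr => j _ do rewrite mulr_suml.
  by rewrite exchange_big /=; apply: eq_bigr => i _; apply: LSM.
rewrite -(sum_nth_perm_iota (fun j => c j * M j) pJ).
apply: (weighted_sum_le_prefix (t := fun q => M (nth 0%N Js q))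
                               (c := fun q => c (nth 0%N Js q))) => //.
- move=> q qm; have Jq := nth_perm_iota_lt pJ qm; apply/andP; split.
    by apply: sumr_ge0 => i _; apply: S0.
  rewrite -(Sc _ Jq) -(sum_nth_perm_iota (fun i => S i (nth 0%N Js q)) pI).
  rewrite /c (sumr_ord_widen (fun i => S (nth 0%N Is i) _) km); apply: ler_sum => i _.
  by case: ifP => // _; apply: S0 => //; apply: nth_perm_iota_lt pI _.
- rewrite (sum_nth_perm_iota c pJ) /c exchange_big /=.
  transitivity (\sum_(i < k) (1 : R)); last by rewrite sumr_const card_ord.
  by apply: eq_bigr => i _; apply: Sr.
Qed.

Lemma sum_nth_minn (R : nmodType) (s : seq R) k :
  \sum_(i < k) nth 0 s i = \sum_(i < minn k (size s)) nth 0 s i.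
Proof.
case: leqP => // /ltnW sk.
rewrite (sumr_ord_widen (fun i => nth 0 s i) sk).
by apply: eq_bigr => i _; case: ltnP => // si; rewrite nth_default.
Qed.

Lemma decr_perm_iota (C : numClosedFieldType) m (p : 'I_m.+1 -> C) :
  exists2 Is, perm_eq Is (iota 0 m.+1) & decr p = map (fun j => p (inord j)) Is.
Proof.
have : perm_eq (decr p) [seq p i | i <- enum 'I_m.+1] by rewrite perm_sort.
case/(perm_iotaP 0) => Is pI ->; rewrite size_map size_enum_ord in pI.
exists Is => //; apply/eq_in_map => j; rewrite (perm_mem pI) mem_iota add0n => jm.
rewrite (nth_map ord0) ?size_enum_ord //; congr p; apply: val_inj.
by rewrite /= nth_enum_ord // inordK.
Qed.

Lemma decr_sorted (C : numClosedFieldType) m (p : 'I_m -> C) :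
  (forall j, p j \is Num.real) -> sorted (fun x y => y <= x) (decr p).
Proof.
move=> preal; apply: (sort_sorted_in (P := Num.real)).
  by move=> x y xr yr; apply: real_leVge.
by rewrite all_map; apply/allP => z _; apply: preal.
Qed.

Lemma doubly_stochastic_majorized (C : numClosedFieldType) m (l mu : 'I_m -> C)
    (S : 'I_m -> 'I_m -> C) :
  (forall j, mu j \is Num.real) ->
  (forall i j, 0 <= S i j) -> (forall j, \sum_i S i j = 1) ->
  (forall i, \sum_j S i j = 1) ->
  (forall i, l i = \sum_j S i j * mu j) -> majorized l mu.
Proof.
case: m l mu S => [|m] l mu S mureal S0 Sc Sr lS k.
  by rewrite /decr enum_ord0 /= !big1 // => i _; rewrite nth_nil.
have [Is pI dl] := decr_perm_iota l; have [Js pJ dmu] := decr_perm_iota mu.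
have sI : size Is = m.+1 by rewrite (perm_size pI) size_iota.
have sJ : size Js = m.+1 by rewrite (perm_size pJ) size_iota.
rewrite sum_nth_minn [X in _ <= X]sum_nth_minn dl dmu !size_map sI sJ.
set k' := minn k (m.+1); have km : (k' <= m.+1)%N by apply: geq_minr.
have nth_decr (p : 'I_m.+1 -> C) Ks : size Ks = m.+1 ->
    \sum_(i < k') nth 0 [seq p (inord j) | j <- Ks] i =
    \sum_(i < k') p (inord (nth 0%N Ks i)).
  move=> sK; apply: eq_bigr => i _; rewrite (nth_map 0%N) // sK.
  exact: leq_trans (ltn_ord i) km.
rewrite !nth_decr //.
apply: (doubly_stochastic_prefix_le (m := m.+1) (k := k') (S := fun i j => S (inord i) (inord j))
          (L := fun j => l (inord j)) (M := fun j => mu (inord j))) => //.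
- by move=> j jm; rewrite -[RHS](Sc (inord j)); apply: eq_bigr => i _; rewrite inord_val.
- by move=> i im; rewrite -[RHS](Sr (inord i)); apply: eq_bigr => j _; rewrite inord_val.
- by move=> i im /=; rewrite lS; apply: eq_bigr => j _; rewrite inord_val.
- move=> i j /andP[ij jm].
  have := sorted_leq_nth (fun y x z (h1 : y <= x) (h2 : z <= y) => le_trans h2 h1)
            (fun x => lexx x) 0 (decr_sorted mureal).
  rewrite dmu size_map sJ => /(_ i j); rewrite !inE.
  rewrite !(nth_map 0%N) ?sJ //; last exact: leq_ltn_trans jm.
  by apply => //; apply: leq_ltn_trans jm.
Qed.

Section QuadraticForm.
Variables (C : numClosedFieldType) (T : finType).

Definition quad (u : T -> C) (A : op C T) : C := \sum_i \sum_j (u i)^* * A i j * u j.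

Definition outer (v : T -> C) : op C T := fun p q => v p * (v q)^*.

Definition id_op : op C T := fun p q => (p == q)%:R.

Lemma quad_sum (I : finType) u (X : op C T) (c : I -> C) (Y : I -> op C T) :
  (forall p q, X p q = \sum_j c j * Y j p q) ->
  quad u X = \sum_j c j * quad u (Y j).
Proof.
move=> hX; rewrite /quad.
under eq_bigr => i _ do under eq_bigr => k _ do rewrite hX mulr_sumr mulr_suml.
under eq_bigr => i _ do rewrite exchange_big /=.
rewrite exchange_big /=; apply: eq_bigr => j _.
rewrite mulr_sumr; apply: eq_bigr => i _; rewrite mulr_sumr; apply: eq_bigr => k _.
by rewrite mulrCA !mulrA.
Qed.

Lemma quad_outer (u v : T -> C) :
  quad u (outer v) = (\sum_x (u x)^* * v x) * (\sum_x (v x)^* * u x).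
Proof.
rewrite /quad /outer mulr_suml; apply: eq_bigr => x _; rewrite mulr_sumr.
by apply: eq_bigr => y _; rewrite !mulrA.
Qed.

Section OrthonormalFamily.
Variables (m : nat) (e : 'I_m -> T -> C).
Hypothesis e_orth : forall k k', \sum_x (e k x)^* * e k' x = (k == k')%:R.

Lemma quad_spectral (b : 'I_m -> C) (X : op C T) i :
  (forall x y, X x y = \sum_k b k * e k x * (e k y)^*) -> quad (e i) X = b i.
Proof.
move=> hX; rewrite (@quad_sum _ _ _ b (fun k => outer (e k))); last first.
  by move=> p q; rewrite hX; apply: eq_bigr => k _; rewrite /outer mulrA.
rewrite (bigD1 i) //= big1 ?addr0 => [|k ki]; rewrite quad_outer !e_orth.
  by rewrite eqxx mulr1n !mulr1.
by rewrite eq_sym (negbTE ki) mul0r mulr0.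
Qed.

Lemma trace_spectral (b : 'I_m -> C) (X : op C T) :
  (forall x y, X x y = \sum_k b k * e k x * (e k y)^*) -> \sum_x X x x = \sum_k b k.
Proof.
move=> hX; under eq_bigr => x _ do rewrite hX.
rewrite exchange_big /=; apply: eq_bigr => k _.
have ek := e_orth k k; rewrite eqxx mulr1n in ek.
by rewrite -[RHS]mulr1 -ek mulr_sumr; apply: eq_bigr => x _; ring.
Qed.

End OrthonormalFamily.

Lemma sum_quad_complete (m : nat) (f : 'I_m -> T -> C) (X : op C T) :
  (forall x y, \sum_k f k x * (f k y)^* = (x == y)%:R) ->
  \sum_i quad (f i) X = \sum_x X x x.
Proof.
move=> f_compl; rewrite /quad exchange_big /=; apply: eq_bigr => x _.
rewrite exchange_big /= (bigD1 x) //= [Z in _ + Z]big1 ?addr0 => [|y yx].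
  have fx := f_compl x x; rewrite eqxx mulr1n in fx.
  by rewrite -[RHS]mulr1 -fx mulr_sumr; apply: eq_bigr => k _; ring.
have fyx := f_compl y x; rewrite (negbTE yx) mulr0n in fyx.
transitivity (X x y * \sum_k f k y * (f k x)^*); last by rewrite fyx mulr0.
by rewrite mulr_sumr; apply: eq_bigr => k _; ring.
Qed.

End QuadraticForm.

Arguments id_op {C T}.

Lemma eigvec_perm_eq (C : numClosedFieldType) (T : finType) (A : op C T) l b :
  eigvec A l -> char_poly (mx_of_op A) = \prod_k ('X - (b k)%:P) ->
  perm_eq (map l (enum 'I_#|T|)) (map b (enum 'I_#|T|)).
Proof.
rewrite /eigvec => -> eqAb; apply: prod_XsubC_eq.
by rewrite !big_map; exact: eqAb.
Qed.

Lemma eigvec_ext (C : numClosedFieldType) (T : finType) (A B : op C T) l :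
  (forall x y, A x y = B x y) -> eigvec A l -> eigvec B l.
Proof.
move=> AB; rewrite /eigvec /mx_of_op => <-; congr char_poly.
by apply/matrixP => i j; rewrite !mxE.
Qed.

Lemma decr_perm_eq (C : numClosedFieldType) m (l b : 'I_m -> C) :
  perm_eq (map l (enum 'I_m)) (map b (enum 'I_m)) ->
  (forall j, b j \is Num.real) -> decr l = decr b.
Proof.
move=> lb breal; apply/perm_sort_inP => //.
- move=> x y; rewrite !(perm_mem lb) => /mapP[i _ ->] /mapP[j _ ->].
  by rewrite orbC; apply: real_leVge.
- by move=> x y z _ _ _ h1 h2; apply: le_trans h2 h1.
- by move=> x y _ _ /andP[h1 h2]; apply/eqP; rewrite eq_le h1 h2.
Qed.

Lemma prob_vec_perm_eq (C : numClosedFieldType) m (l b : 'I_m -> C) :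
  perm_eq (map l (enum 'I_m)) (map b (enum 'I_m)) -> prob_vec b -> prob_vec l.
Proof.
move=> lb [b0 b1]; split.
  move=> i; have : l i \in map b (enum 'I_m) by rewrite -(perm_mem lb) map_f ?mem_enum.
  by case/mapP => j _ ->.
have sum_map (f : 'I_m -> C) : \sum_(x <- map f (enum 'I_m)) x = \sum_i f i.
  by rewrite big_map big_enum.
by rewrite -b1 -!sum_map; apply: perm_big.
Qed.

Lemma state_spectral_prob (C : numClosedFieldType) (T : finType) (A : op C T)
    m (b : 'I_m -> C) (e : 'I_m -> T -> C) :
  is_state A -> (forall k k', \sum_x (e k x)^* * e k' x = (k == k')%:R) ->
  (forall x y, A x y = \sum_k b k * e k x * (e k y)^*) -> prob_vec b.
Proof.
move=> [_ A_ge0 A_tr] e_orth hA; split.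
  by move=> k; rewrite -(quad_spectral e_orth k hA); apply: A_ge0.
by rewrite -(trace_spectral e_orth hA).
Qed.

Section UnitalChannel.
Variables (C : numClosedFieldType) (T : finType) (Phi : op C T -> op C T).
Hypothesis Phi_linear : forall (I : finType) (X : op C T) (c : I -> C) (Y : I -> op C T),
  (forall p q, X p q = \sum_j c j * Y j p q) ->
  forall x y, Phi X x y = \sum_j c j * Phi (Y j) x y.
Hypothesis Phi_outer_ge0 : forall u v, 0 <= quad u (Phi (outer v)).
Hypothesis Phi_unital : forall x y, Phi id_op x y = (x == y)%:R.
Hypothesis Phi_trace_outer : forall v, \sum_x Phi (outer v) x x = \sum_x v x * (v x)^*.

Lemma unital_channel_majorized (A : op C T) l la :
  is_state A -> (forall i j, Phi A j i = (Phi A i j)^*) ->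
  eigvec (Phi A) l -> eigvec A la -> [/\ majorized l la, prob_vec l & prob_vec la].
Proof.
move=> A_state PhiA_herm el ela; have [A_herm _ _] := A_state.
have [b [e [cpA hA e_orth e_compl]]] := hermitian_op_spectral A_herm.
have [lam [f [cpPhiA hPhiA f_orth f_compl]]] := hermitian_op_spectral PhiA_herm.
have [b_ge0 b_sum] := state_spectral_prob A_state e_orth hA.
(* S is doubly stochastic: its rows sum to 1 by unitality, its columns by
   trace preservation. *)
pose S i j := quad (f i) (Phi (outer (e j))).
have S_ge0 i j : 0 <= S i j by apply: Phi_outer_ge0.
have S_row i : \sum_j S i j = 1.
  rewrite -(quad_spectral f_orth (b := fun _ => 1) (X := Phi id_op) i); last first.
    by move=> x y; rewrite Phi_unital -f_compl; apply: eq_bigr => k _; rewrite mul1r.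
  rewrite (quad_sum (f i) (c := fun _ => 1) (Y := fun j => Phi (outer (e j)))).
    by apply: eq_bigr => j _; rewrite mul1r.
  apply: Phi_linear => p q; rewrite /id_op -e_compl.
  by apply: eq_bigr => k _; rewrite mul1r.
have S_col j : \sum_i S i j = 1.
  have ej := e_orth j j; rewrite eqxx mulr1n in ej.
  rewrite /S sum_quad_complete // Phi_trace_outer -ej.
  by apply: eq_bigr => x _; apply: mulrC.
have lam_S i : lam i = \sum_j S i j * b j.
  rewrite -(quad_spectral f_orth i hPhiA).
  rewrite (quad_sum (f i) (c := b) (Y := fun j => Phi (outer (e j)))).
    by apply: eq_bigr => j _; rewrite mulrC.
  apply: Phi_linear => p q; rewrite hA.
  by apply: eq_bigr => k _; rewrite /outer mulrA.
have b_real j : b j \is Num.real by apply: ger0_real.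
have lam_ge0 i : 0 <= lam i.
  by rewrite lam_S; apply: sumr_ge0 => j _; apply: mulr_ge0.
have lam_sum : \sum_i lam i = 1.
  under eq_bigr => i _ do rewrite lam_S.
  rewrite exchange_big /= -b_sum; apply: eq_bigr => j _.
  by rewrite -mulr_suml S_col mul1r.
have l_lam := eigvec_perm_eq el cpPhiA; have la_b := eigvec_perm_eq ela cpA.
split; [|exact: prob_vec_perm_eq l_lam _ | exact: prob_vec_perm_eq la_b _].
rewrite /majorized (decr_perm_eq l_lam) => [|i]; last exact: ger0_real.
rewrite (decr_perm_eq la_b b_real).
exact: doubly_stochastic_majorized b_real S_ge0 S_col S_row lam_S.
Qed.

End UnitalChannel.

Lemma det_mx22 (R : comNzRingType) (A : 'M[R]_2) :
  \det A = A ord0 ord0 * A ord_max ord_max - A ord0 ord_max * A ord_max ord0.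
Proof.
rewrite (expand_det_row _ ord0) !big_ord_recl big_ord0 addr0 /cofactor !det_mx11.
rewrite !mxE /= expr0 expr1 mul1r mulN1r mulrN.
have -> : lift ord0 0 = ord_max :> 'I_2 by apply: val_inj.
by have -> : lift ord_max 0 = ord0 :> 'I_2 by apply: val_inj.
Qed.

Lemma det_xcol (R : comNzRingType) (A : 'M[R]_2) :
  \det (xcol ord0 ord_max A) = - \det A.
Proof. by rewrite xcolE det_mulmx det_perm odd_tperm /= mulrN1. Qed.

Section KeyUnitary.
Variables (d n : nat) (G : 'M['F_d]_2).
Local Notation T := (qidx d n).

(* (x, b) |-> (x, b) G, the inverse of keymap. *)
Definition keyinv (p : T * T) : T * T :=
  ([ffun k => g00 G * p.1 k + g10 G * p.2 k],
   [ffun k => g01 G * p.1 k + g11 G * p.2 k]).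

Hypothesis G_unit : \det G != 0.

Lemma detV_mul_det : (\det G)^-1 * (g00 G * g11 G - g01 G * g10 G) = 1.
Proof. by rewrite -det_mx22 mulVf. Qed.

Lemma keyinvK : cancel keyinv (keymap G).
Proof.
move=> [x b]; rewrite /keymap /keyinv; congr pair; apply/ffunP => k; rewrite !ffunE /=.
  by rewrite -[RHS]mul1r -detV_mul_det; ring.
by rewrite -[RHS]mul1r -detV_mul_det; ring.
Qed.

Lemma keymapK : cancel (keymap G) keyinv.
Proof.
move=> [x b]; rewrite /keymap /keyinv; congr pair; apply/ffunP => k; rewrite !ffunE /=.
  by rewrite -[RHS]mul1r -detV_mul_det; ring.
by rewrite -[RHS]mul1r -detV_mul_det; ring.
Qed.

(* keyU is a permutation matrix, so each entry of U (rho (x) sigma) U^dagger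
   is a single entry of rho (x) sigma. *)
Lemma convE (C : numClosedFieldType) (rho sigma : op C T) x y :
  conv G rho sigma x y =
  \sum_b rho (keyinv (x, b)).1 (keyinv (y, b)).1 * sigma (keyinv (x, b)).2 (keyinv (y, b)).2.
Proof.
rewrite /conv /ptrB; apply: eq_bigr => b _.
rewrite /conjU (bigD1 (keyinv (x, b))) //= [Z in _ + Z]big1 ?addr0 => [|r rx]; last first.
  apply: big1 => s _; rewrite /keyU; case: eqP => [xb|_]; last by rewrite !mul0r.
  by rewrite xb keymapK eqxx in rx.
rewrite (bigD1 (keyinv (y, b))) //= [Z in _ + Z]big1 ?addr0 => [|s sy].
  by rewrite /keyU !keyinvK !eqxx conjC1 mul1r mulr1.
rewrite /keyU; case: ((y, b) =P keymap G s) => [yb|_]; last by rewrite conjC0 mulr0.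
by rewrite yb keymapK eqxx in sy.
Qed.

End KeyUnitary.

Lemma ffun_lin_injl (I : finType) (F : fieldType) (a b : F) (v : {ffun I -> F}) :
  a != 0 -> injective (fun u : {ffun I -> F} => [ffun k => a * u k + b * v k]).
Proof.
move=> a0 u1 u2 /ffunP eq_u; apply/ffunP => k; have := eq_u k.
by rewrite !ffunE => /addIr /(mulfI a0).
Qed.

Lemma ffun_lin_injr (I : finType) (F : fieldType) (a b : F) (u : {ffun I -> F}) :
  b != 0 -> injective (fun v : {ffun I -> F} => [ffun k => a * u k + b * v k]).
Proof.
move=> b0 v1 v2 /ffunP eq_v; apply/ffunP => k; have := eq_v k.
by rewrite !ffunE => /addrI /(mulfI b0).
Qed.

Lemma quad_comp_ge0 (C : numClosedFieldType) (T : finType) (A : op C T)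
    (g : T -> T) (w : T -> C) :
  (forall v, 0 <= quad v A) -> 0 <= \sum_x \sum_y (w x)^* * A (g x) (g y) * w y.
Proof.
move=> A_ge0; set v := fun p => \sum_(x | g x == p) w x.
suff -> : \sum_x \sum_y (w x)^* * A (g x) (g y) * w y = quad v A by [].
rewrite /quad (partition_big g xpredT) //=; apply: eq_bigr => p _.
rewrite rmorph_sum; under [RHS]eq_bigr => q _ do rewrite !mulr_suml.
rewrite [RHS]exchange_big /=; apply: eq_bigr => x /eqP gx.
rewrite [LHS](partition_big g xpredT) //= gx; apply: eq_bigr => q _; rewrite mulr_sumr.
by apply: eq_bigr => y /eqP ->.
Qed.

Section Convolution.
Variables (C : numClosedFieldType) (d n : nat) (G : 'M['F_d]_2).
Hypothesis G_unit : \det G != 0.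
Local Notation T := (qidx d n).

Lemma conv_trace (rho sigma : op C T) :
  \sum_x conv G rho sigma x x = (\sum_p rho p p) * (\sum_q sigma q q).
Proof.
under eq_bigr => x _ do rewrite (convE G_unit).
rewrite mulr_suml; under [RHS]eq_bigr => p _ do rewrite mulr_sumr.
rewrite !pair_bigA /= [RHS](reindex_inj (can_inj (keyinvK G_unit))) /=.
by apply: eq_bigr => -[x b] _.
Qed.

Lemma conv_hermitian (rho sigma : op C T) :
  (forall i j, rho j i = (rho i j)^*) -> (forall i j, sigma j i = (sigma i j)^*) ->
  forall x y, conv G rho sigma y x = (conv G rho sigma x y)^*.
Proof.
move=> rho_herm sigma_herm x y; rewrite !(convE G_unit) rmorph_sum.
by apply: eq_bigr => b _; rewrite rmorphM rho_herm sigma_herm.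
Qed.

Lemma conv_linear_r (rho : op C T) (I : finType) (X : op C T) (c : I -> C)
    (Y : I -> op C T) :
  (forall p q, X p q = \sum_j c j * Y j p q) ->
  forall x y, conv G rho X x y = \sum_j c j * conv G rho (Y j) x y.
Proof.
move=> hX x y; rewrite (convE G_unit).
under eq_bigr => b _ do rewrite hX mulr_sumr.
rewrite exchange_big /=; apply: eq_bigr => j _.
by rewrite (convE G_unit) mulr_sumr; apply: eq_bigr => b _; ring.
Qed.

Lemma conv_outer_ge0 (rho : op C T) : (forall v, 0 <= quad v rho) ->
  forall u v, 0 <= quad u (conv G rho (outer v)).
Proof.
move=> rho_ge0 u v; pose w b x := u x * (v (keyinv G (x, b)).2)^*.
suff -> : quad u (conv G rho (outer v)) = \sum_b \sum_x \sum_y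
    (w b x)^* * rho (keyinv G (x, b)).1 (keyinv G (y, b)).1 * w b y.
  by apply: sumr_ge0 => b _; apply: (quad_comp_ge0 (fun x => (keyinv G (x, b)).1)).
rewrite /quad.
under eq_bigr => x _ do under eq_bigr => y _ do
  rewrite (convE G_unit) mulr_sumr mulr_suml.
under eq_bigr => x _ do rewrite exchange_big.
rewrite exchange_big /=; apply: eq_bigr => b _; apply: eq_bigr => x _.
by apply: eq_bigr => y _; rewrite /w /outer rmorphM /= conjCK; ring.
Qed.

(* Unitality needs g01 != 0 (distinct outputs x, y give distinct second labels)
   and g10 != 0 (for fixed x the first label runs over all of T as b does). *)
Lemma conv_unital_r (rho : op C T) : g01 G != 0 -> g10 G != 0 ->
  \sum_p rho p p = 1 -> forall x y, conv G rho id_op x y = (x == y)%:R.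
Proof.
move=> g01_neq0 g10_neq0 rho_tr x y; rewrite (convE G_unit).
have [<-|xy] := eqVneq x y.
  rewrite -[in RHS]rho_tr [RHS](reindex_inj (@ffun_lin_injr _ _ (g00 G) _ x g10_neq0)) /=.
  by apply: eq_bigr => b _; rewrite /id_op eqxx mulr1.
apply: big1 => b _; rewrite /id_op; case: eqP => [/= xy_b|_]; last by rewrite mulr0.
by move/ffun_lin_injl: xy_b => /(_ g01_neq0) eq_xy; rewrite eq_xy eqxx in xy.
Qed.

End Convolution.

Lemma det_xcol22_neq0 (F : fieldType) (G : 'M[F]_2) :
  \det G != 0 -> \det (xcol ord0 ord_max G) != 0.
Proof. by rewrite det_xcol oppr_eq0. Qed.

(* Exchanging the columns of G exchanges the two components of keyinv, hence
   the roles of rho and sigma. *)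
Lemma conv_xcol (C : numClosedFieldType) d n (G : 'M['F_d]_2) (rho sigma : op C (qidx d n)) :
  \det G != 0 -> forall x y, conv G rho sigma x y = conv (xcol ord0 ord_max G) sigma rho x y.
Proof.
move=> G_unit x y; rewrite (convE G_unit) (convE (det_xcol22_neq0 G_unit)).
apply: eq_bigr => b _; rewrite /keyinv /g00 /g01 /g10 /g11 /xcol /col_perm !mxE.
by rewrite tpermL tpermR mulrC.
Qed.

Lemma conv_majorized_r (C : numClosedFieldType) d n (G : 'M['F_d]_2)
    (rho sigma : op C (qidx d n)) l ls :
  \det G != 0 -> g01 G != 0 -> g10 G != 0 -> is_state rho -> is_state sigma ->
  eigvec (conv G rho sigma) l -> eigvec sigma ls ->
  [/\ majorized l ls, prob_vec l & prob_vec ls].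
Proof.
move=> G_unit g01_neq0 g10_neq0 [rho_herm rho_ge0 rho_tr] sigma_state.
have [sigma_herm _ _] := sigma_state.
apply: (unital_channel_majorized (Phi := conv G rho)) => //.
- exact: conv_linear_r.
- exact: conv_outer_ge0.
- exact: conv_unital_r.
- by move=> v; rewrite conv_trace // rho_tr mul1r.
- exact: conv_hermitian.
Qed.

Lemma conv_majorized_l (C : numClosedFieldType) d n (G : 'M['F_d]_2)
    (rho sigma : op C (qidx d n)) l lr :
  \det G != 0 -> g00 G != 0 -> g11 G != 0 -> is_state rho -> is_state sigma ->
  eigvec (conv G rho sigma) l -> eigvec rho lr ->
  [/\ majorized l lr, prob_vec l & prob_vec lr].
Proof.
move=> G_unit g00_neq0 g11_neq0 rho_state sigma_state el elr.
apply: (conv_majorized_r (det_xcol22_neq0 G_unit) _ _ sigma_state rho_state _ elr).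
- by rewrite /g01 /xcol /col_perm mxE tpermR.
- by rewrite /g10 /xcol /col_perm mxE tpermL.
- exact: eigvec_ext (conv_xcol _ _ G_unit) el.
Qed.

Unset Implicit Arguments.

Theorem mainTheorem10 (C : numClosedFieldType) (d n : nat) (G : 'M['F_d]_2)
  (rho sigma : op C (qidx d n)) :
  prime d -> (1 <= n)%N -> \det G != 0 ->
  is_state rho -> is_state sigma ->
  (odd_parity_positive G ->
     forall (l ls : 'I_#|qidx d n| -> C),
       eigvec (conv G rho sigma) l -> eigvec sigma ls ->
       majorized l ls /\
       (forall f, schur_concave f -> f ls <= f l)) /\
  (even_parity_positive G ->
     forall (l lr : 'I_#|qidx d n| -> C),
       eigvec (conv G rho sigma) l -> eigvec rho lr ->
       majorized l lr /\
       (forall f, schur_concave f -> f lr <= f l)) /\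
  (positiveG G ->
     forall (l lr ls : 'I_#|qidx d n| -> C),
       eigvec (conv G rho sigma) l -> eigvec rho lr -> eigvec sigma ls ->
       [/\ majorized l lr, majorized l ls &
           (forall f, schur_concave f -> f lr <= f l /\ f ls <= f l)]).
Proof.
move=> _ _ G_unit rho_state sigma_state.
have odd_case l ls : odd_parity_positive G -> eigvec (conv G rho sigma) l ->
    eigvec sigma ls -> [/\ majorized l ls, prob_vec l & prob_vec ls].
  by case/and3P=> _ g01_neq0 g10_neq0; apply: conv_majorized_r.
have even_case l lr : even_parity_positive G -> eigvec (conv G rho sigma) l ->
    eigvec rho lr -> [/\ majorized l lr, prob_vec l & prob_vec lr].
  by case/and3P=> _ g00_neq0 g11_neq0; apply: conv_majorized_l.
split; [|split].
- move=> G_odd l ls el els; have [l_ls l_prob ls_prob] := odd_case l ls G_odd el els.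
  by split=> // f f_concave; apply: f_concave.
- move=> G_even l lr el elr; have [l_lr l_prob lr_prob] := even_case l lr G_even el elr.
  by split=> // f f_concave; apply: f_concave.
- move=> /andP[G_odd G_even] l lr ls el elr els.
  have [l_lr l_prob lr_prob] := even_case l lr G_even el elr.
  have [l_ls _ ls_prob] := odd_case l ls G_odd el els.
  by split=> // f f_concave; split; apply: f_concave.
Qed.
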